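(* Let $0\le d\le r\le\min\{m,n\}$. If the $\mathfrak{S}_n\times\mathfrak{S}_m$-irreducible $V^\lambda\otimes V^\mu$ occurs in $R(\mathcal{Z}_{n,m,r})_d$, then $\lambda_1\le n+m-d-r$ and $\mu_1\le n+m-d-r$.
   Context: Fix positive integers $n,m$. $\mathbb{C}[\mathbf{x}_{n\times m}]$ is the polynomial ring in variables $x_{i,j}$; $\mathfrak{S}_n\times\mathfrak{S}_m$ acts by $(g,h)\cdot x_{i,j}=x_{g(i),h(j)}$ (permuting rows and columns of matrices). For finite stable $\mathcal{Z}\subseteq\mathrm{Mat}_{n\times m}(\mathbb{C})$, $R(\mathcal{Z})=\mathbb{C}[\mathbf{x}_{n\times m}]/\mathrm{gr}\,\mathbf{I}(\mathcal{Z})$, where $\mathbf{I}(\mathcal{Z})$ is the vanishing ideal and $\mathrm{gr}$ takes the ideal generated by top-degree homogeneous components of nonzero elements; it is a graded $\mathfrak{S}_n\times\mathfrak{S}_m$-module with components $R(\mathcal{Z})_d$. $\mathcal{Z}_{n,m,r}$ is the set of $n\times m$ $0/1$ matrices with exactly $r$ ones and at most one $1$ in each row and each column (rook placements with $r$ rooks). $V^\lambda$ denotes the Specht module indexed by $\lambda$. *)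

From HB Require Import structures.
From mathcomp Require Import all_boot all_order all_algebra all_fingroup.
From mathcomp Require Import algC.
From mathcomp Require Import mpoly.
Set Implicit Arguments. Unset Strict Implicit. Unset Printing Implicit Defensive.
Import Order.TTheory GRing.Theory Num.Theory.
Local Open Scope ring_scope.

Definition polyI (I : finType) := {mpoly algC[#|I|]}.

Definition var (I : finType) (i : I) : polyI I := 'X_(enum_rank i).

Definition rename (I : finType) (f : I -> I) (p : polyI I) : polyI I :=
  p \mPo [tuple var (f (enum_val k)) | k < #|I|].

Definition evalI (I : finType) (z : I -> algC) (p : polyI I) : algC :=
  p.@[fun k => z (enum_val k)].

(* p is homogeneous of total degree d (0 is homogeneous of every degree). *)
Definition homog_deg (I : finType) (d : nat) (p : polyI I) : bool :=
  all [pred mo | mdeg mo == d] (msupp p).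

Definition topcomp (I : finType) (p : polyI I) : polyI I :=
  \sum_(mo <- msupp p | mdeg mo == (msize p).-1) p@_mo *: 'X_[mo].

(* gr J : the ideal generated by the top-degree components of nonzero
   elements of J. *)
Definition in_gr (I : finType) (J : polyI I -> Prop) (p : polyI I) : Prop :=
  exists s : seq (polyI I * polyI I),
    (forall q, q \in s -> J q.2 /\ q.2 != 0) /\
    p = \sum_(q <- s) q.1 * topcomp q.2.

Definition MatVar (n m : nat) := ('I_n * 'I_m)%type.
Definition Cx (n m : nat) := polyI (MatVar n m).

Definition matact (n m : nat) (g : {perm 'I_n}) (h : {perm 'I_m}) (p : Cx n m) : Cx n m :=
  rename (fun ij : MatVar n m => (g ij.1, h ij.2)) p.

Definition vanishing (n m : nat) (Z : 'M[algC]_(n, m) -> Prop) (p : Cx n m) : Prop :=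
  forall M, Z M -> evalI (fun ij : MatVar n m => M ij.1 ij.2) p = 0.

Definition rook_placement (n m r : nat) (M : 'M[algC]_(n, m)) : Prop :=
  [/\ forall i j, M i j = 0 \/ M i j = 1,
      #|[set ij : 'I_n * 'I_m | M ij.1 ij.2 == 1]| = r,
      forall i, leq #|[set j | M i j == 1]| 1 &
      forall j, leq #|[set i | M i j == 1]| 1].

Definition is_partition (n : nat) (la : seq nat) : bool :=
  [&& sorted geq la, 0%N \notin la & sumn la == n].

(* Column of the k-th box of the Young diagram of la, boxes read row by row. *)
Fixpoint box_col (la : seq nat) (k : nat) : nat :=
  match la with
  | [::] => k
  | a :: la' => if (k < a)%N then k else box_col la' (k - a)
  end.

Definition YZVar (n m : nat) := ('I_n + 'I_m)%type.
Definition Cyz (n m : nat) := polyI (YZVar n m).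

(* Specht polynomial of the tableau of shape la whose k-th box (row reading)
   is filled with s k, in the variables v : 'I_n -> poly:
   product over columns of the Vandermonde determinants of column entries. *)
Definition specht_poly (R : comNzRingType) (n : nat) (la : seq nat)
    (v : 'I_n -> R) (s : {perm 'I_n}) : R :=
  \prod_(k : 'I_n) \prod_(l : 'I_n | (k < l)%N && (box_col la k == box_col la l))
     (v (s k) - v (s l)).

(* V^la (x) V^mu realized as the span of products of Specht polynomials in the
   y- and z-variables (Specht module realized by Specht polynomials). *)
Definition specht_tensor (n m : nat) (la mu : seq nat) (w : Cyz n m) : Prop :=
  exists c : {perm 'I_n} -> {perm 'I_m} -> algC,
    w = \sum_(s : {perm 'I_n}) \sum_(t : {perm 'I_m})
          c s t *: (specht_poly la (fun i => var (inl i : YZVar n m)) s *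
                    specht_poly mu (fun j => var (inr j : YZVar n m)) t).

Definition yzact (n m : nat) (g : {perm 'I_n}) (h : {perm 'I_m}) (p : Cyz n m) : Cyz n m :=
  rename (fun v : YZVar n m => match v with inl i => inl (g i) | inr j => inr (h j) end) p.

(* V^la (x) V^mu occurs in R(Z)_d = C[x]_d / (gr I(Z))_d : there is an
   S_n x S_m-equivariant linear map from V^la (x) V^mu into C[x]_d which stays
   injective after passing to the quotient by gr I(Z). *)
Definition occurs_in_R (n m : nat) (Z : 'M[algC]_(n, m) -> Prop) (d : nat)
    (la mu : seq nat) : Prop :=
  exists f : {linear Cyz n m -> Cx n m},
    [/\ forall w, specht_tensor la mu w -> homog_deg d (f w),
        forall g h w, specht_tensor la mu w -> f (yzact g h w) = matact g h (f w) &
        forall w, specht_tensor la mu w -> w != 0 -> ~ in_gr (vanishing Z) (f w)].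

From HB Require Import structures.
From mathcomp Require Import all_boot all_order all_algebra all_fingroup.
From mathcomp Require Import algC mpoly.
From mathcomp Require Import zify.
Set Implicit Arguments. Unset Strict Implicit. Unset Printing Implicit Defensive.
Import Order.TTheory GRing.Theory Num.Theory.
Local Open Scope ring_scope.

(* Let q be homogeneous of degree d, A a set of rows, and Z the rook placements.
   If (n - |A|) + (m - d) < r, the symmetrization of q over the permutations of A
   agrees on Z with a polynomial of degree < d, hence lies in gr I(Z).  It
   suffices to treat a squarefree monomial whose support S is a set of d cells in
   distinct rows and columns (otherwise it vanishes on Z or has degree < d).  At a
   placement z the symmetrization counts the permutations of A moving S into the
   rooks of z.  Fewer than r rooks avoid both the rows of A and the columns of S,
   and rooks never share a line; so, with b the number of cells of S in rows of A,
   the count is the order of the pointwise stabilizer of those b rows when the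
   other d - b cells of S are rooks and exactly r - b rooks lie outside, and 0
   otherwise.  The first condition is a monomial of degree d - b, the second a
   Lagrange polynomial of degree b - 1 in the number of outside rooks.
   A copy of V^la (x) V^mu in R(Z)_d maps the symmetrization over the first row of
   la of a product of Specht polynomials to such a symmetrization; the former is
   nonzero (evaluate each variable at the row of its box), so the latter is not in
   gr I(Z), which forces (n - la_1) + (m - d) >= r.  Columns are symmetric. *)

Section Polynomials.
Variable I : finType.
Implicit Types (p q : polyI I) (z : I -> algC) (f : I -> I).

HB.instance Definition _ z :=
  GRing.RMorphism.copy (evalI z) (meval (fun k => z (enum_val k))).

HB.instance Definition _ f :=
  GRing.RMorphism.copy (rename f) (comp_mpoly [tuple var (f (enum_val k)) | k < #|I|]).

Lemma evalIZ z c p : evalI z (c *: p) = c * evalI z p.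
Proof. exact: mevalZ. Qed.

Lemma evalIC z c : evalI z c%:MP = c.
Proof. exact: mevalC. Qed.

Lemma evalI_var z i : evalI z (var i) = z i.
Proof. by rewrite /evalI /var mevalXU enum_rankK. Qed.

Lemma renameZ f c p : rename f (c *: p) = c *: rename f p.
Proof. exact: comp_mpolyZ. Qed.

Lemma rename_var f i : rename f (var i) = var (f i).
Proof. by rewrite /rename /var comp_mpolyXU -tnth_nth tnth_mktuple enum_rankK. Qed.

Lemma evalI_rename z f p : evalI z (rename f p) = evalI (z \o f) p.
Proof.
rewrite /evalI /rename comp_mpoly_meval; apply: meval_eq => k.
by rewrite tnth_mktuple -/(evalI z _) evalI_var.
Qed.

Lemma homog_degE d p : homog_deg d p = (p \is d.-homog).
Proof. by rewrite dhomogE. Qed.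

Lemma dhomog_rename d f p : p \is d.-homog -> rename f p \is d.-homog.
Proof.
move=> hom_p; rewrite [p]mpolyE rmorph_sum /= big_seq.
apply: rpred_sum => mo mo_p; rewrite renameZ rpredZ //.
have -> : d = mdeg mo by rewrite (dhomog_mf hom_p mo_p).
rewrite /rename comp_mpolyX mdegE.
elim/big_rec2: _ => [|k e q _ hom_q]; first exact: dhomog1.
apply: dhomogM hom_q; rewrite tnth_mktuple.
have hom_var : var (f (enum_val k)) \is 1.-homog by rewrite /var dhomogX; apply/eqP; apply: mdeg1.
by have := dhomogMn (mo k) hom_var; rewrite mul1n.
Qed.

Definition mvars (mo : 'X_{1.. #|I|}) := [set i : I | (0 < mo (enum_rank i))%N].

Lemma card_mvars mo : (#|mvars mo| <= mdeg mo)%N.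
Proof.
rewrite mdegE -sum1_card (reindex (fun k : 'I_#|I| => enum_val k)) /=; last first.
  by exists (@enum_rank I) => k _; rewrite ?enum_valK ?enum_rankK.
rewrite big_mkcond /=; apply: leq_sum => k _; rewrite inE enum_valK.
by case: (mo k).
Qed.

Lemma evalI_monomial01 z mo : (forall i, z i = 0 \/ z i = 1) ->
  evalI z 'X_[mo] = \prod_(i in mvars mo) z i.
Proof.
move=> z01; rewrite /evalI mevalX (reindex (@enum_rank I)) /=; last first.
  by exists (fun k : 'I_#|I| => enum_val k) => k _; rewrite ?enum_valK ?enum_rankK.
rewrite [RHS]big_mkcond /=; apply: eq_bigr => i _; rewrite enum_rankK inE.
by case: (mo (enum_rank i)) => [|k] //=; case: (z01 i) => ->; rewrite ?expr1n ?expr0n.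
Qed.

(* [msize] is one more than the total degree. *)
Definition deg_le (e : nat) p := (msize p <= e.+1)%N.

Lemma deg_leW a b p : (a <= b)%N -> deg_le a p -> deg_le b p.
Proof. by rewrite /deg_le => le_ab le_p; rewrite (leq_trans le_p) ?ltnS. Qed.

Lemma deg_leD e p q : deg_le e p -> deg_le e q -> deg_le e (p + q).
Proof. by move=> le_p le_q; rewrite /deg_le (leq_trans (msizeD_le _ _)) // geq_max; apply/andP. Qed.

Lemma deg_leB e p q : deg_le e p -> deg_le e q -> deg_le e (p - q).
Proof. by move=> le_p le_q; apply: deg_leD; rewrite // /deg_le msizeN. Qed.

Lemma deg_leZ e c p : deg_le e p -> deg_le e (c *: p).
Proof. exact: leq_trans (msizeZ_le _ _). Qed.

Lemma deg_leC e c : deg_le e c%:MP.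
Proof. by rewrite /deg_le msizeC; case: (c != 0). Qed.

Lemma deg_le_var i : deg_le 1 (var i).
Proof. by rewrite /deg_le /var msizeX mdeg1. Qed.

Lemma deg_leM a b p q : deg_le a p -> deg_le b q -> deg_le (a + b) (p * q).
Proof.
rewrite /deg_le => le_p le_q.
have [->|p0] := eqVneq p 0; first by rewrite mul0r msize0.
have [->|q0] := eqVneq q 0; first by rewrite mulr0 msize0.
by rewrite msizeM // -subn1 leq_subLR add1n -addnS -addSn leq_add.
Qed.

Lemma deg_le_sum e (J : Type) (s : seq J) (P : pred J) (F : J -> polyI I) :
  (forall j, P j -> deg_le e (F j)) -> deg_le e (\sum_(j <- s | P j) F j).
Proof.
move=> le_F; elim/big_rec: _ => [|j p Pj le_p]; last exact: deg_leD (le_F _ Pj) le_p.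
by rewrite /deg_le msize0.
Qed.

Lemma deg_le_prod (J : Type) (s : seq J) (P : pred J) (F : J -> polyI I) (e : J -> nat) :
  (forall j, P j -> deg_le (e j) (F j)) ->
  deg_le (\sum_(j <- s | P j) e j) (\prod_(j <- s | P j) F j).
Proof.
move=> le_F; elim: s => [|j s IHs]; first by rewrite !big_nil /deg_le msize1.
by rewrite !big_cons; case: ifP => // Pj; apply: deg_leM (le_F _ Pj) IHs.
Qed.

Lemma deg_le_prod_var (A : {pred I}) (F : I -> I) :
  deg_le #|A| (\prod_(i in A) var (F i)).
Proof. by rewrite -sum1_card; apply: deg_le_prod => i _; apply: deg_le_var. Qed.

Lemma msize_dhomog d p : p \is d.-homog -> p != 0 -> msize p = d.+1.
Proof.
move=> hom_p p0; apply/anti_leq/andP; split.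
  by rewrite msizeE; apply/bigmax_leqP_seq => mo /(dhomog_mf hom_p) ->.
have : msupp p != [::] by rewrite msupp_eq0.
case E: (msupp p) => [|mo s] // _.
have mo_p : mo \in msupp p by rewrite E mem_head.
by rewrite -(dhomog_mf hom_p mo_p) msize_mdeg_lt.
Qed.

Lemma pihomog_msize_le d p : (msize p <= d)%N -> pihomog mdeg d p = 0.
Proof.
move=> le_pd; rewrite pihomogE big1_seq // => mo /andP[/eqP mo_d mo_p].
by move: (msize_mdeg_lt mo_p); rewrite mo_d ltnNge le_pd.
Qed.

Lemma msizeB_dhomog d p q : p \is d.-homog -> p != 0 -> (msize q <= d)%N ->
  msize (p - q) = d.+1.
Proof.
move=> hom_p p0 le_qd; have msize_p := msize_dhomog hom_p p0.
apply/anti_leq/andP; split.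
  by rewrite (leq_trans (msizeD_le _ _)) // geq_max msizeN msize_p leqnn leqW.
rewrite ltnNge; apply/negP => /pihomog_msize_le.
by rewrite pihomogB (pihomog_msize_le le_qd) subr0 pihomog_dE // => /eqP; rewrite (negbTE p0).
Qed.

Lemma topcomp_dhomogB d p q : p \is d.-homog -> p != 0 -> (msize q <= d)%N ->
  topcomp (p - q) = p.
Proof.
move=> hom_p p0 le_qd.
have -> : topcomp (p - q) = pihomog mdeg d (p - q).
  by rewrite /topcomp (msizeB_dhomog hom_p p0 le_qd).
by rewrite pihomogB (pihomog_msize_le le_qd) subr0 pihomog_dE.
Qed.

Lemma in_gr_dhomog (J : polyI I -> Prop) d p q :
  p \is d.-homog -> (msize q <= d)%N -> J (p - q) -> in_gr J p.
Proof.
move=> hom_p le_qd Jpq; have [->|p0] := eqVneq p 0.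
  by exists [::]; split=> [q'|]; rewrite ?big_nil.
exists [:: (1, p - q)]; split; last by rewrite big_seq1 mul1r (topcomp_dhomogB hom_p p0 le_qd).
move=> q'; rewrite inE => /eqP -> /=; split => //.
by rewrite -msize_poly_eq0 (msizeB_dhomog hom_p p0 le_qd).
Qed.

End Polynomials.

Lemma perm_on_extend (T I : finType) (A : {set T}) (J : {set I}) (a b : I -> T) :
  {in J &, injective a} -> {in J &, injective b} ->
  {in J, forall j, (a j \in A) && (b j \in A)} ->
  exists2 h, h \in Sym A & {in J, forall j, h (a j) = b j}.
Proof.
move=> a_inj b_inj abA.
suff [h hA hab] : exists2 h, h \in Sym A & {in enum J, forall j, h (a j) = b j}.
  by exists h => // j; rewrite -mem_enum; apply: hab.
have : {subset enum J <= J} by move=> j; rewrite mem_enum.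
elim: (enum J) (enum_uniq (pred_of_set J)) => [_ _|j s IHs /= /andP[j_s s_uniq] sJ].
  by exists 1%g => //; apply: group1.
have jJ : j \in J by apply: sJ; rewrite inE eqxx.
have s'J : {subset s <= J} by move=> k ks; apply: sJ; rewrite inE ks orbT.
have [h' h'A h'ab] := IHs s_uniq s'J.
have /andP[ajA bjA] := abA j jJ.
have ujA : h' (a j) \in A by move: h'A; rewrite inE => /perm_closed ->.
exists (h' * tperm (h' (a j)) (b j))%g.
  rewrite groupM // inE; apply: subset_trans (tperm_on _ _) _.
  by apply/subsetP => t; rewrite !inE => /orP[] /eqP ->.
move=> k; rewrite inE permM => /predU1P[-> | ks]; first by rewrite tpermL.
have kj : k != j by apply: contraNneq j_s => <-.
have kJ := s'J k ks.
rewrite (h'ab k ks) tpermD //.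
  apply: contra kj => /eqP; rewrite -(h'ab k ks) => /perm_inj akj.
  by rewrite (a_inj _ _ kJ jJ (esym akj)).
by apply: contra kj => /eqP bjk; rewrite (b_inj _ _ kJ jJ (esym bjk)).
Qed.

Lemma card_perm_prescribed (T I : finType) (A : {set T}) (J : {set I}) (a b : I -> T) :
  {in J &, injective a} -> {in J &, injective b} ->
  {in J, forall j, (a j \in A) && (b j \in A)} ->
  #|[set g in Sym A | [forall j in J, g (a j) == b j]]| =
  #|[set g in Sym A | [forall j in J, g (a j) == a j]]|.
Proof.
move=> a_inj b_inj abA; have [h hA hab] := perm_on_extend a_inj b_inj abA.
rewrite -[RHS](card_rcoset _ h); apply: eq_card => g.
have SymE s : (s \in Sym A) = perm_on A s by rewrite inE.
rewrite mem_rcoset !inE -!SymE groupMr ?groupV //; congr (_ && _).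
apply: eq_forallb_in => j jJ; rewrite permM -(hab j jJ).
by rewrite -[RHS](inj_eq (@perm_inj _ h)) permKV.
Qed.

Lemma prod_nat_forall (F : numDomainType) (J : finType) (B : {pred J}) (P : pred J) :
  \prod_(j in B) ((P j)%:R : F) = [forall j in B, P j]%:R.
Proof.
have [/forall_inP BP | /forall_inPn[j jB nPj]] := boolP [forall j in B, P j].
  by rewrite big1 // => j /BP ->.
by rewrite (bigD1 j) //= (negbTE nPj) mul0r.
Qed.

Lemma sum_nat_card (F : numDomainType) (J : finType) (B : {pred J}) (P : pred J) :
  \sum_(j in B) ((P j)%:R : F) = #|[set j in B | P j]|%:R.
Proof.
rewrite -sum1_card natr_sum big_mkcond [RHS]big_mkcond /=.
by apply: eq_bigr => j _; rewrite inE; case: (j \in B); case: (P j).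
Qed.

Lemma prod_lagrange_nat (F : numFieldType) (a c y : nat) : (a <= y < c)%N ->
  \prod_(a.+1 <= t < c) ((t%:R - a%:R)^-1 * (t%:R - y%:R)) = (y == a)%:R :> F.
Proof.
case/andP => le_ay lt_yc; have [-> | ya] := eqVneq y a.
  rewrite big_seq big1 // => t; rewrite mem_index_iota => /andP[lt_at _].
  by rewrite mulVf // subr_eq0 eqr_nat gtn_eqF.
have lt_ay : (a < y)%N by rewrite ltn_neqAle eq_sym ya.
rewrite (bigD1_seq y) ?iota_uniq ?mem_index_iota ?lt_ay //=.
by rewrite subrr mulr0 mul0r.
Qed.

(* Cells [V] are located by abstract [row] and [col] maps, so that the
   symmetrizations over rows and over columns share one development. *)
Section RookPoints.
Variables (V T1 T2 : finType) (row : V -> T1) (col : V -> T2) (r : nat).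

Definition rooks (z : V -> algC) := [set v | z v == 1].

Definition rook_point (z : V -> algC) : Prop :=
  [/\ forall v, z v = 0 \/ z v = 1, #|rooks z| = r,
      forall i, (#|[set v in rooks z | row v == i]| <= 1)%N &
      forall j, (#|[set v in rooks z | col v == j]| <= 1)%N].

Variable z : V -> algC.
Hypothesis z_rook : rook_point z.

Lemma rook_pointE v : z v = (v \in rooks z)%:R.
Proof.
case: z_rook => z01 _ _ _; rewrite inE.
by case: (z01 v) => ->; rewrite ?eqxx // eq_sym oner_eq0.
Qed.

Lemma card_rooks : #|rooks z| = r.
Proof. by case: z_rook. Qed.

Lemma row_inj_rooks : {in rooks z &, injective row}.
Proof.
case: z_rook => _ _ row1 _ v w.
rewrite !inE => v_z w_z rvw.
by apply: (card_le1_eqP (row1 (row w))); rewrite !inE ?v_z ?w_z ?rvw eqxx.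
Qed.

Lemma col_inj_rooks : {in rooks z &, injective col}.
Proof.
case: z_rook => _ _ _ col1 v w.
rewrite !inE => v_z w_z cvw.
by apply: (card_le1_eqP (col1 (col w))); rewrite !inE ?v_z ?w_z ?cvw eqxx.
Qed.

Lemma card_rooks_inj (U : finType) (h : V -> U) (P : pred V) (C : {set U}) :
  {in rooks z &, injective h} -> (forall v, v \in rooks z -> P v -> h v \in C) ->
  (#|[set v in rooks z | P v]| <= #|C|)%N.
Proof.
move=> h_inj hC; rewrite -(card_in_imset (f := h)).
  by apply/subset_leq_card/subsetP => u /imsetP[v /setIdP[v_z Pv] ->]; apply: hC.
by move=> v w /setIdP[v_z _] /setIdP[w_z _]; apply: h_inj.
Qed.

Lemma evalI_sum_var (B : {set V}) : evalI z (\sum_(v in B) var v) = #|rooks z :&: B|%:R.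
Proof.
rewrite rmorph_sum /=; under eq_bigr do rewrite evalI_var rook_pointE.
by rewrite sum_nat_card; congr (_%:R); apply: eq_card => v; rewrite !inE andbC.
Qed.

Lemma evalI_prod_var (B : {set V}) :
  evalI z (\prod_(v in B) var v) = [forall v in B, v \in rooks z]%:R.
Proof.
rewrite rmorph_prod /=; under eq_bigr do rewrite evalI_var rook_pointE.
exact: prod_nat_forall.
Qed.

End RookPoints.

Lemma rook_point_sym (V T1 T2 : finType) (row : V -> T1) (col : V -> T2) r z :
  rook_point row col r z -> rook_point col row r z.
Proof. by case. Qed.

Section RowAction.
Variables (V T1 T2 : finType) (row : V -> T1) (col : V -> T2).
Variable act : {perm T1} -> V -> V.
Hypotheses (cell_inj : forall v w, row v = row w -> col v = col w -> v = w)
  (row_act : forall g v, row (act g v) = g (row v))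
  (col_act : forall g v, col (act g v) = col v).
Variables (r d : nat) (A : {set T1}).
Hypothesis outside_lt_r : (#|T1| - #|A| + (#|T2| - d) < r)%N.

Local Notation rook_point := (rook_point row col r).

Lemma act_injective g : injective (act g).
Proof.
move=> v w gvw; apply: cell_inj; last by rewrite -(col_act g v) gvw col_act.
by apply: (@perm_inj _ g); rewrite -!row_act gvw.
Qed.

Lemma act_out g v : g \in Sym A -> row v \notin A -> act g v = v.
Proof. by rewrite inE => gA vA; apply: cell_inj; rewrite ?col_act // row_act (out_perm gA). Qed.

Definition partial_transversal (S : {set V}) := (#|row @: S| == #|S|) && (#|col @: S| == #|S|).

Lemma prod_act_rook_point z (S : {set V}) g : rook_point z ->
  \prod_(v in S) z (act g v) = [forall v in S, act g v \in rooks z]%:R.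
Proof.
by move=> z_rook; rewrite -prod_nat_forall; apply: eq_bigr => v _; rewrite (rook_pointE z_rook).
Qed.

Lemma partial_transversal_rooks z (S : {set V}) g : rook_point z ->
  [forall v in S, act g v \in rooks z] -> partial_transversal S.
Proof.
move=> z_rook /forall_inP gS_z; apply/andP; split; apply/imset_injP => v w vS wS vw.
  by apply: (@act_injective g); apply: (row_inj_rooks z_rook); rewrite ?gS_z // !row_act vw.
by apply: (@act_injective g); apply: (col_inj_rooks z_rook); rewrite ?gS_z // !col_act.
Qed.

Section Transversal.
Variable S : {set V}.
Hypothesis card_S : #|S| = d.

Definition S_in := [set v in S | row v \in A].
Definition S_out := [set v in S | row v \notin A].
Local Notation b := #|S_in|.
Definition outside := [set v | (row v \notin A) || (col v \notin col @: S)].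

(* Lagrange polynomial in the number of outside rooks: 1 at [r - b] and 0 at
   [r - b + 1], ..., [r - 1]. *)
Definition indicator_poly : polyI V :=
  \prod_((r - b).+1 <= t < r)
     ((t%:R - (r - b)%:R)^-1 *: ((t%:R)%:MP - \sum_(v in outside) var v)).

Definition row_stab := [set g in Sym A | [forall v in S_in, g (row v) == row v]].

(* Outside [0 < b <= r] no permutation moves [S] into the rooks, and the product
   would have degree [d]. *)
Definition count_poly : polyI V :=
  if (0 < b <= r)%N then #|row_stab|%:R *: ((\prod_(v in S_out) var v) * indicator_poly)
  else 0.

Lemma card_S_split : (b + #|S_out| = d)%N.
Proof.
rewrite -card_S -(cardsID [set v | row v \in A] S).
by congr (_ + _)%N; apply: eq_card => v; rewrite !inE andbC.
Qed.

Lemma msize_count_poly : (msize count_poly <= d)%N.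
Proof.
rewrite /count_poly; case: ifP => [/andP[b_gt0 b_le_r] | _]; last by rewrite msize0.
have le_prod : deg_le (#|S_out| + (b - 1)) (\prod_(v in S_out) var v * indicator_poly).
  apply: deg_leM; first exact: (deg_le_prod_var _ id).
  apply: (deg_leW (a := \sum_((r - b).+1 <= t < r) 1%N)).
    by rewrite sum_nat_const_nat muln1 subnS subKn // subn1.
  apply: deg_le_prod => t _; apply/deg_leZ/deg_leB; first exact: deg_leC.
  by apply: deg_le_sum => v _; apply: deg_le_var.
have -> : d = (#|S_out| + (b - 1)).+1 by rewrite -card_S_split -addnS subn1 prednK // addnC.
exact: deg_leZ le_prod.
Qed.

Section Evaluation.
Variable z : V -> algC.
Hypotheses (S_tr : partial_transversal S) (z_rook : rook_point z).

Definition placements := [set g in Sym A | [forall v in S, act g v \in rooks z]].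

(* A placement maps [S_in] injectively into the rooks lying in rows of [A] and
   columns of [S]. *)
Local Notation inner_rooks := (rooks z :\: outside).

Lemma placements_out : ~~ [forall v in S_out, v \in rooks z] -> placements = set0.
Proof.
case/forall_inPn => v /setIdP[vS vA] vz; apply/setP => g; rewrite in_set0.
apply/negP => /setIdP[gA /forall_inP /(_ v vS)].
by rewrite (act_out gA vA) (negbTE vz).
Qed.

Lemma card_rooks_outside : (#|rooks z :&: outside| < r)%N.
Proof.
pose R1 := [set v in rooks z | row v \in ~: A].
pose R2 := [set v in rooks z | col v \in ~: (col @: S)].
have sub_R12 : rooks z :&: outside \subset R1 :|: R2.
  by apply/subsetP => v; rewrite !inE => /andP[-> /orP[] ->]; rewrite ?orbT.
have card_R1 : (#|R1| <= #|~: A|)%N.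
  exact: card_rooks_inj (row_inj_rooks z_rook) (fun _ _ rv => rv).
have card_R2 : (#|R2| <= #|~: (col @: S)|)%N.
  exact: card_rooks_inj (col_inj_rooks z_rook) (fun _ _ cv => cv).
have card_colS : #|col @: S| = d by rewrite -card_S; apply/eqP; case/andP: S_tr.
have := subset_leq_card sub_R12; have := (leq_card_setU R1 R2).1.
have := cardsC A; have := cardsC (col @: S); lia.
Qed.

Lemma card_inner_rooks_placement g : g \in placements -> (b <= #|inner_rooks|)%N.
Proof.
case/setIdP => gA /forall_inP gS_z; rewrite -(card_imset _ (@act_injective g)).
apply/subset_leq_card/subsetP => _ /imsetP[v /setIdP[vS vA] ->].
rewrite in_setD gS_z // inE negb_or !negbK col_act imset_f // row_act.
by move: gA; rewrite inE => /perm_closed ->; rewrite vA.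
Qed.

Lemma evalI_indicator_poly : (#|inner_rooks| <= b <= r)%N ->
  evalI z indicator_poly = (#|rooks z :&: outside| == r - b)%N%:R.
Proof.
move=> /andP[le_inner_b le_br].
rewrite rmorph_prod /=.
under eq_bigr do rewrite evalIZ rmorphB /= evalIC (evalI_sum_var z_rook).
apply: prod_lagrange_nat; have := card_rooks_outside.
have := cardsID outside (rooks z); rewrite (card_rooks z_rook); lia.
Qed.

Section RooksOnOut.
Hypothesis out_rooks : [forall v in S_out, v \in rooks z].

Lemma col_inner_rooks : col @: inner_rooks \subset col @: S_in.
Proof.
apply/subsetP => x /imsetP[u /setDP[u_z u_out] ->].
move: u_out; rewrite inE negb_or !negbK => /andP[uA /imsetP[v vS cuv]].
have [vA | vA] := boolP (row v \in A); first by rewrite cuv imset_f // inE vS vA.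
have v_z : v \in rooks z by apply: (forall_inP out_rooks); rewrite inE vS.
by move: uA; rewrite (col_inj_rooks z_rook u_z v_z cuv) (negbTE vA).
Qed.

Lemma col_inj_inner_rooks : {in inner_rooks &, injective col}.
Proof. by move=> u w /setDP[u_z _] /setDP[w_z _]; apply: (col_inj_rooks z_rook). Qed.

Lemma card_inner_rooks : (#|inner_rooks| <= b)%N.
Proof.
rewrite -(card_in_imset col_inj_inner_rooks).
exact: leq_trans (subset_leq_card col_inner_rooks) (leq_imset_card _ _).
Qed.

Lemma inner_rook_of_col : #|inner_rooks| = b ->
  exists u : V -> V, forall v, v \in S_in -> (u v \in inner_rooks) && (col (u v) == col v).
Proof.
move=> card_inner; have col_inner : col @: inner_rooks = col @: S_in.
  apply/eqP; rewrite eqEcard col_inner_rooks (card_in_imset col_inj_inner_rooks) card_inner.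
  exact: leq_imset_card.
pose P v w := v \in S_in -> (w \in inner_rooks) && (col w == col v).
apply: (@fin_all_exists _ (fun=> V) P) => v; rewrite /P.
have [vS_in | _] := boolP (v \in S_in); last by exists v.
have /imsetP[w w_in cvw] : col v \in col @: inner_rooks by rewrite col_inner imset_f.
by exists w => _; rewrite w_in cvw eqxx.
Qed.

Lemma placementsE (u : V -> V) :
  (forall v, v \in S_in -> (u v \in rooks z) /\ col (u v) = col v) ->
  placements = [set g in Sym A | [forall v in S_in, g (row v) == row (u v)]].
Proof.
move=> u_col; apply/setP => g; rewrite !inE; apply: andb_id2l => gA.
have gSym : g \in Sym A by rewrite inE.
apply/forall_inP/forall_inP => [gS_z v /[dup] vS_in /setIdP[vS _] | gu v vS].
  have [uv_z cuv] := u_col v vS_in.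
  by rewrite -row_act (col_inj_rooks z_rook (gS_z v vS) uv_z) // col_act cuv.
have [vA | vA] := boolP (row v \in A); last first.
  by rewrite act_out // (forall_inP out_rooks) // inE vS.
have vS_in : v \in S_in by rewrite inE vS.
have [uv_z cuv] := u_col v vS_in.
suff -> : act g v = u v by [].
by apply: cell_inj; rewrite ?row_act ?(eqP (gu v vS_in)) // col_act cuv.
Qed.

Lemma card_placements : #|inner_rooks| = b -> #|placements| = #|row_stab|.
Proof.
case/inner_rook_of_col => u u_in.
have u_col v : v \in S_in -> (u v \in rooks z) /\ col (u v) = col v.
  by move=> /u_in /andP[/setDP[uv_z _] /eqP cuv].
have S_in_S v : v \in S_in -> v \in S by case/setIdP.
have [row_inj_S col_inj_S] : {in S &, injective row} /\ {in S &, injective col}.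
  by case/andP: S_tr => /imset_injP ? /imset_injP.
rewrite (placementsE u_col) (card_perm_prescribed (a := row) (b := fun v => row (u v))) //.
- by move=> v w /S_in_S vS /S_in_S wS; apply: row_inj_S.
- move=> v w vS_in wS_in; have [uv_z cuv] := u_col v vS_in; have [uw_z cuw] := u_col w wS_in.
  move/(row_inj_rooks z_rook uv_z uw_z)/(congr1 col); rewrite cuv cuw.
  by apply: col_inj_S; apply: S_in_S.
move=> v /[dup] /setIdP[_ ->] /u_in /andP[/setDP[_]].
by rewrite inE negb_or negbK => /andP[-> _].
Qed.

End RooksOnOut.

Lemma evalI_count_poly : evalI z count_poly = #|placements|%:R.
Proof.
have [out_rooks | out_nrooks] := boolP [forall v in S_out, v \in rooks z]; last first.
  rewrite placements_out // cards0 /count_poly; case: ifP => _; last by rewrite rmorph0.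
  by rewrite evalIZ rmorphM /= (evalI_prod_var z_rook) (negbTE out_nrooks) mul0r mulr0.
have card_out := card_rooks_outside.
have card_in := card_inner_rooks out_rooks.
have := cardsID outside (rooks z); rewrite (card_rooks z_rook) => card_split.
have [lt_in_b | ge_in_b] := ltnP #|inner_rooks| b.
  have -> : placements = set0.
    apply/setP => g; rewrite in_set0; apply/negP => /card_inner_rooks_placement.
    by rewrite leqNgt lt_in_b.
  rewrite cards0 /count_poly; case: ifP => b_range; last by rewrite rmorph0.
  rewrite evalIZ rmorphM /= evalI_indicator_poly; last by rewrite ltnW //; case/andP: b_range.
  by rewrite (_ : (_ == _) = false) ?mulr0 //; apply/negbTE; rewrite neq_ltn; lia.
have card_in_b : #|inner_rooks| = b by apply/eqP; rewrite eqn_leq card_in.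
rewrite card_placements // /count_poly ifT; last by apply/andP; lia.
rewrite evalIZ rmorphM /= (evalI_prod_var z_rook) out_rooks evalI_indicator_poly; last first.
  by rewrite card_in_b leqnn; lia.
by rewrite (_ : (_ == _) = true) ?mul1r ?mulr1 //; apply/eqP; lia.
Qed.

End Evaluation.
End Transversal.

(* If two cells of [S] share a line, the symmetrization vanishes on rook points. *)
Definition sym_low_poly (S : {set V}) : polyI V :=
  if (#|S| < d)%N then \sum_(g in Sym A) \prod_(v in S) var (act g v)
  else if partial_transversal S then count_poly S else 0.

Lemma msize_sym_low_poly (S : {set V}) : (#|S| <= d)%N -> (msize (sym_low_poly S) <= d)%N.
Proof.
rewrite /sym_low_poly; case: ltnP => [lt_Sd _ | ge_Sd le_Sd].
  have : deg_le #|S| (\sum_(g in Sym A) \prod_(v in S) var (act g v)).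
    by apply: deg_le_sum => g _; apply: deg_le_prod_var.
  by move/leq_trans; apply.
case: ifP => _; last by rewrite msize0.
by apply: msize_count_poly; apply/eqP; rewrite eqn_leq le_Sd.
Qed.

Lemma evalI_sym_low_poly z (S : {set V}) : rook_point z -> (#|S| <= d)%N ->
  evalI z (sym_low_poly S) = \sum_(g in Sym A) \prod_(v in S) z (act g v).
Proof.
move=> z_rook le_Sd; rewrite /sym_low_poly; case: ltnP => [_ | ge_Sd].
  rewrite rmorph_sum; apply: eq_bigr => g _.
  by rewrite rmorph_prod; apply: eq_bigr => v _; apply: evalI_var.
under eq_bigr do rewrite prod_act_rook_point //.
case: ifP => S_tr.
  by rewrite evalI_count_poly // ?sum_nat_card //; apply/eqP; rewrite eqn_leq le_Sd.
rewrite rmorph0 big1 // => g _.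
have [/(partial_transversal_rooks z_rook) | //] := boolP [forall v in S, act g v \in rooks z].
by rewrite S_tr.
Qed.

Lemma sym_rename_in_gr (J : polyI V -> Prop) q :
  (forall p, (forall z, rook_point z -> evalI z p = 0) -> J p) ->
  q \is d.-homog -> in_gr J (\sum_(g in Sym A) rename (act g) q).
Proof.
move=> J_van hom_q.
have le_mvars mo : mo \in msupp q -> (#|mvars mo| <= d)%N.
  move=> mo_q; have -> : d = mdeg mo by rewrite (dhomog_mf hom_q mo_q).
  exact: card_mvars.
pose L := \sum_(mo <- msupp q) q@_mo *: sym_low_poly (mvars mo).
apply: (@in_gr_dhomog _ _ d _ L).
- by apply: rpred_sum => g _; apply: dhomog_rename.
- apply: leq_trans (mmeasure_sum _ _ _ _) _; apply/bigmax_leqP_seq => mo mo_q _.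
  by rewrite (leq_trans (msizeZ_le _ _)) // msize_sym_low_poly // le_mvars.
apply: J_van => z z_rook; apply/eqP; rewrite rmorphB /= subr_eq0 !rmorph_sum /=.
have evalI_rename_act g : evalI z (rename (act g) q) =
    \sum_(mo <- msupp q) q@_mo * \prod_(v in mvars mo) z (act g v).
  rewrite evalI_rename {1}[q]mpolyE rmorph_sum /=; apply: eq_bigr => mo _.
  by rewrite evalIZ evalI_monomial01 // => v; case: z_rook => z01 _ _ _; apply: z01.
rewrite (eq_bigr _ (fun g _ => evalI_rename_act g)) exchange_big /= big_seq [X in _ == X]big_seq.
apply/eqP/eq_bigr => mo mo_q.
by rewrite evalIZ evalI_sym_low_poly ?le_mvars // mulr_sumr.
Qed.

End RowAction.

Section SpechtPolynomials.
Variables (n : nat) (la : seq nat).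

Lemma rmorph_specht (R S : comNzRingType) (f : {rmorphism R -> S}) (v : 'I_n -> R) s :
  f (specht_poly la v s) = specht_poly la (f \o v) s.
Proof.
rewrite rmorph_prod; apply: eq_bigr => k _.
by rewrite rmorph_prod; apply: eq_bigr => l _; rewrite rmorphB.
Qed.

Lemma eq_specht_poly (R : comNzRingType) (v1 v2 : 'I_n -> R) s :
  v1 =1 v2 -> specht_poly la v1 s = specht_poly la v2 s.
Proof. by move=> v12; apply: eq_bigr => k _; apply: eq_bigr => l _; rewrite !v12. Qed.

Lemma specht_polyM (R : comNzRingType) (v : 'I_n -> R) (s g : {perm 'I_n}) :
  specht_poly la (v \o g) s = specht_poly la v (s * g)%g.
Proof. by apply: eq_bigr => k _; apply: eq_bigr => l _; rewrite !permM. Qed.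

End SpechtPolynomials.

Fixpoint box_row (la : seq nat) (k : nat) : nat :=
  match la with
  | [::] => k
  | a :: la' => if (k < a)%N then 0%N else (box_row la' (k - a)).+1
  end.

Lemma box_row_neq la k l : (k < sumn la)%N -> (l < sumn la)%N -> k != l ->
  box_col la k = box_col la l -> box_row la k != box_row la l.
Proof.
elim: la k l => [|a la IHla] k l //= lt_k lt_l kl.
case: ltnP => ka; case: ltnP => la' //=.
- by move=> kl'; rewrite kl' eqxx in kl.
- by move=> kl'; rewrite eqSS; apply: IHla => //; lia.
Qed.

Section FirstRow.
Variables (n : nat) (la : seq nat).
Hypothesis sum_la : sumn la = n.

Definition row_point (k : 'I_n) : algC := (box_row la k)%:R.
Definition first_row := [set k : 'I_n | (k < head 0%N la)%N].

Lemma specht_row_point_neq0 : specht_poly la row_point 1 != 0.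
Proof.
apply/prodf_neq0 => k _; apply/prodf_neq0 => l /andP[kl /eqP col_kl].
rewrite !perm1 subr_eq0 eqr_nat; apply: box_row_neq; rewrite ?sum_la ?ltn_ord //.
by rewrite neq_ltn kl.
Qed.

Lemma specht_row_point_Sym s : s \in Sym first_row ->
  specht_poly la row_point s = specht_poly la row_point 1.
Proof.
rewrite inE => s_row; rewrite -[in LHS](mul1g s) -specht_polyM.
apply: eq_specht_poly => k /=; have [k_row | k_nrow] := boolP (k \in first_row).
  have sk_row : s k \in first_row by rewrite (perm_closed _ s_row).
  by move: k_row sk_row; rewrite /row_point !inE; case: (la) => [|a la'] //= -> ->.
by rewrite (out_perm s_row k_nrow).
Qed.

Lemma card_first_row : (head 0%N la <= #|first_row|)%N.
Proof.
have le_head : (head 0%N la <= n)%N by rewrite -sum_la; case: (la) => //= a la'; rewrite leq_addr.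
have widen_inj : injective (widen_ord le_head) by move=> i j /(congr1 val) /= /val_inj.
rewrite -[X in (X <= _)%N]card_ord -(card_imset _ widen_inj).
by apply/subset_leq_card/subsetP => _ /imsetP[i _ ->]; rewrite inE /= ltn_ord.
Qed.

End FirstRow.

Lemma rook_placement_point n m r (M : 'M[algC]_(n, m)) : rook_placement r M ->
  rook_point (fun ij : MatVar n m => ij.1) (fun ij => ij.2) r (fun ij => M ij.1 ij.2).
Proof.
case=> M01 card_M row_M col_M; split => // [i | j].
  have -> : [set ij in rooks (fun ij : MatVar n m => M ij.1 ij.2) | ij.1 == i] =
      (fun j => (i, j)) @: [set j | M i j == 1].
    apply/setP => -[i' j]; rewrite !inE /=.
    apply/idP/imsetP => [/andP[M1 /eqP <-] | [j' + [-> ->]]].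
      by exists j; rewrite ?inE.
    by rewrite inE eqxx andbT.
  by rewrite card_imset // => j1 j2 [].
have -> : [set ij in rooks (fun ij : MatVar n m => M ij.1 ij.2) | ij.2 == j] =
    (fun i => (i, j)) @: [set i | M i j == 1].
  apply/setP => -[i j']; rewrite !inE /=.
  apply/idP/imsetP => [/andP[M1 /eqP <-] | [i' + [-> ->]]].
    by exists i; rewrite ?inE.
  by rewrite inE eqxx andbT.
by rewrite card_imset // => i1 i2 [].
Qed.

Section Occurrence.
Variables (n m r d : nat) (la mu : seq nat).
Hypotheses (sum_la : sumn la = n) (sum_mu : sumn mu = m).

Local Notation spl s := (specht_poly la (fun i => var (inl i : YZVar n m)) s).
Local Notation spm t := (specht_poly mu (fun j => var (inr j : YZVar n m)) t).

Lemma specht_tensor_sum (P : pred {perm 'I_n}) (Q : pred {perm 'I_m}) :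
  specht_tensor la mu (\sum_(s | P s) \sum_(t | Q t) (spl s * spm t)).
Proof.
exists (fun s t => (P s && Q t)%:R); rewrite [LHS]big_mkcond /=.
apply: eq_bigr => s _; rewrite big_mkcond /=; case: (P s) => /=.
  by apply: eq_bigr => t _; case: (Q t); rewrite ?scale1r ?scale0r.
by rewrite big1 // => t _; rewrite scale0r.
Qed.

Lemma yzact_specht (g : {perm 'I_n}) (h : {perm 'I_m}) s t :
  yzact g h (spl s * spm t) = spl (s * g)%g * spm (t * h)%g.
Proof.
rewrite /yzact rmorphM /= !rmorph_specht -!specht_polyM.
by congr (_ * _); apply: eq_specht_poly => i /=; rewrite rename_var.
Qed.

Definition tableau_point (v : YZVar n m) : algC :=
  match v with inl i => row_point la i | inr j => row_point mu j end.

Lemma specht_sum_neq0 (P : pred {perm 'I_n}) (Q : pred {perm 'I_m}) :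
  (forall s, P s -> s \in Sym (first_row n la)) ->
  (forall t, Q t -> t \in Sym (first_row m mu)) -> P 1%g -> Q 1%g ->
  \sum_(s | P s) \sum_(t | Q t) (spl s * spm t) != 0.
Proof.
move=> P_row Q_row P1 Q1.
pose c : algC := specht_poly la (@row_point n la) 1%g * specht_poly mu (@row_point m mu) 1%g.
have c_neq0 : c != 0 by rewrite mulf_neq0 ?specht_row_point_neq0.
have evalI_spl s t : P s -> Q t -> evalI tableau_point (spl s * spm t) = c.
  move=> Ps Qt; rewrite /c -(specht_row_point_Sym (P_row s Ps)).
  rewrite -(specht_row_point_Sym (Q_row t Qt)) rmorphM /= !rmorph_specht.
  by congr (_ * _); apply: eq_specht_poly => i /=; rewrite evalI_var.
apply/negP => /eqP /(congr1 (evalI tableau_point)).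
rewrite rmorph0 rmorph_sum (eq_bigr (fun=> c *+ #|Q|)) => [|s Ps]; last first.
  by rewrite rmorph_sum -sumr_const; apply: eq_bigr => t Qt; apply: evalI_spl.
rewrite sumr_const => /eqP; rewrite !mulrn_eq0 (negbTE c_neq0) orbF !eqn0Ngt.
have P_gt0 : (0 < #|P|)%N by apply/card_gt0P; exists 1%g.
have Q_gt0 : (0 < #|Q|)%N by apply/card_gt0P; exists 1%g.
by rewrite P_gt0 Q_gt0.
Qed.

Variable f : {linear Cyz n m -> Cx n m}.
Hypotheses (f_homog : forall w, specht_tensor la mu w -> homog_deg d (f w))
  (f_equiv : forall g h w, specht_tensor la mu w -> f (yzact g h w) = matact g h (f w))
  (f_inj : forall w, specht_tensor la mu w -> w != 0 ->
     ~ in_gr (vanishing (@rook_placement n m r)) (f w)).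

Let w1 := spl 1%g * spm 1%g.

Lemma specht_tensor_w1 : specht_tensor la mu w1.
Proof. by have := specht_tensor_sum (pred1 1%g) (pred1 1%g); rewrite !big_pred1_eq. Qed.

Lemma dhomog_f_w1 : f w1 \is d.-homog.
Proof. by rewrite -homog_degE; apply/f_homog/specht_tensor_w1. Qed.

Lemma f_sym_rows (A : {set 'I_n}) :
  f (\sum_(s | s \in Sym A) \sum_(t | t == 1%g) (spl s * spm t)) =
  \sum_(g in Sym A) matact g 1 (f w1).
Proof.
rewrite linear_sum; apply: eq_bigr => g _.
by rewrite big_pred1_eq -f_equiv ?yzact_specht ?mul1g //; apply: specht_tensor_w1.
Qed.

Lemma f_sym_cols (B : {set 'I_m}) :
  f (\sum_(s | s == 1%g) \sum_(t | t \in Sym B) (spl s * spm t)) =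
  \sum_(h in Sym B) matact 1 h (f w1).
Proof.
rewrite big_pred1_eq linear_sum; apply: eq_bigr => h _.
by rewrite -f_equiv ?yzact_specht ?mul1g //; apply: specht_tensor_w1.
Qed.

Lemma rook_vanishing (p : Cx n m) :
  (forall z, rook_point (fun ij : MatVar n m => ij.1) (fun ij => ij.2) r z -> evalI z p = 0) ->
  vanishing (@rook_placement n m r) p.
Proof. by move=> p_van M /rook_placement_point; apply: p_van. Qed.

Lemma rows_bound : (r <= n - #|first_row n la| + (m - d))%N.
Proof.
rewrite leqNgt; apply/negP => lt_r.
have w_neq0 : \sum_(s | s \in Sym (first_row n la)) \sum_(t | t == 1%g) (spl s * spm t) != 0.
  by apply: specht_sum_neq0 => // t /eqP ->; apply: group1.
apply: (f_inj _ w_neq0); first exact: specht_tensor_sum.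
rewrite f_sym_rows; apply: (@sym_rename_in_gr _ _ _ fst snd
  (fun g ij => (g ij.1, (1%g : {perm 'I_m}) ij.2)) _ _ _ r d).
- by move=> [i j] [i' j'] /= -> ->.
- by [].
- by move=> g ij /=; rewrite perm1.
- by rewrite !card_ord.
- exact: rook_vanishing.
exact: dhomog_f_w1.
Qed.

Lemma cols_bound : (r <= m - #|first_row m mu| + (n - d))%N.
Proof.
rewrite leqNgt; apply/negP => lt_r.
have w_neq0 : \sum_(s | s == 1%g) \sum_(t | t \in Sym (first_row m mu)) (spl s * spm t) != 0.
  by apply: specht_sum_neq0 => // s /eqP ->; apply: group1.
apply: (f_inj _ w_neq0); first exact: specht_tensor_sum.
rewrite f_sym_cols; apply: (@sym_rename_in_gr _ _ _ snd fst
  (fun h ij => ((1%g : {perm 'I_n}) ij.1, h ij.2)) _ _ _ r d).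
- by move=> [i j] [i' j'] /= -> ->.
- by [].
- by move=> h ij /=; rewrite perm1.
- by rewrite !card_ord.
- by move=> p p_van; apply: rook_vanishing => z /rook_point_sym; apply: p_van.
exact: dhomog_f_w1.
Qed.

End Occurrence.

Theorem mainTheorem8 (n m r d : nat) (la mu : seq nat) :
  (d <= r)%N -> (r <= minn m n)%N ->
  is_partition n la -> is_partition m mu ->
  occurs_in_R (@rook_placement n m r) d la mu ->
  (head 0%N la <= n + m - d - r)%N /\ (head 0%N mu <= n + m - d - r)%N.
Proof.
move=> le_dr le_r_mn /and3P[_ _ /eqP sum_la] /and3P[_ _ /eqP sum_mu] [f [f_homog f_equiv f_inj]].
have := rows_bound sum_la sum_mu f_homog f_equiv f_inj.
have := cols_bound sum_la sum_mu f_homog f_equiv f_inj.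
have := card_first_row sum_la; have := card_first_row sum_mu.
have := max_card (first_row n la); have := max_card (first_row m mu).
by rewrite !card_ord; move: le_r_mn; rewrite leq_min; lia.
Qed.
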